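(* Let $G$ be a connected $k$-regular graph on $n\ge 2$ vertices. Then $h_G<\sqrt{n-1}\,\gamma(G)$, where $h_G$ is the Cheeger constant of $G$.
   Context: For a finite simple undirected graph $G$ with $n$ vertices, let $\mathcal{F}=\{x\in\mathbb{R}^{V(G)} : \sum_{v} x_v = 0,\ \|x\|_\infty = 1\}$, for $x\in\mathcal{F}$ let $\gamma_x(G)=\max_{uv\in E(G)}|x_u-x_v|$, and $\gamma(G)=\min_{x\in\mathcal{F}}\gamma_x(G)$. For $S\subseteq V(G)$, $\operatorname{vol}(S)=\sum_{u\in S}\deg(u)$; for nonempty proper $S\subsetneq V(G)$, $\partial S$ is the set of edges with exactly one endpoint in $S$, $h_G(S)=|\partial S|/\min(\operatorname{vol}(S),\operatorname{vol}(V(G)\setminus S))$, and $h_G=\min_S h_G(S)$ over nonempty proper subsets $S$. *)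

From HB Require Import structures.
From mathcomp Require Import all_boot all_order all_algebra.
From mathcomp Require Import all_classical all_reals.
Set Implicit Arguments. Unset Strict Implicit. Unset Printing Implicit Defensive.
Import Order.TTheory GRing.Theory Num.Theory.
Local Open Scope ring_scope.

Definition simple_graph (T : finType) (e : rel T) : Prop :=
  symmetric e /\ irreflexive e.

Definition connected_graph (T : finType) (e : rel T) : Prop :=
  forall x y : T, connect e x y.

Definition deg (T : finType) (e : rel T) (u : T) : nat := #|[set v | e u v]|.

Definition regular (T : finType) (e : rel T) (k : nat) : Prop :=
  forall u : T, deg e u = k.

Definition vol (T : finType) (e : rel T) (S : {set T}) : nat :=
  (\sum_(u in S) deg e u)%N.

(* |∂S|: each edge with exactly one endpoint in S is counted once, oriented
   from its endpoint in S to its endpoint outside S. *)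
Definition boundary_size (T : finType) (e : rel T) (S : {set T}) : nat :=
  #|[set p : T * T | [&& e p.1 p.2, p.1 \in S & p.2 \notin S]]|.

Definition hS (R : realType) (T : finType) (e : rel T) (S : {set T}) : R :=
  (boundary_size e S)%:R / (minn (vol e S) (vol e (~: S)))%:R.

(* Cheeger constant: minimum over nonempty proper subsets (a finite nonempty
   family, so inf = min). *)
Definition cheeger (R : realType) (T : finType) (e : rel T) : R :=
  inf [set hS R e S | S in [set S : {set T} | S != finset.set0 /\ S != finset.setT]]%classic.

Definition sup_norm (R : realType) (T : finType) (x : T -> R) : R :=
  \big[Num.max/0]_(v : T) `|x v|.

Definition feasible (R : realType) (T : finType) : set (T -> R) :=
  [set x | \sum_(v : T) x v = 0 /\ sup_norm x = 1]%classic.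

(* gamma_x(G) = max over edges uv of |x_u - x_v| (all quantities >= 0, so
   0 is a harmless default for the max). *)
Definition gamma_x (R : realType) (T : finType) (e : rel T) (x : T -> R) : R :=
  \big[Num.max/0]_(p : T * T | e p.1 p.2) `|x p.1 - x p.2|.

(* gamma(G) = min over x in F of gamma_x(G); the minimum is attained
   (F is compact, gamma_x continuous), so it equals the infimum. *)
Definition gamma (R : realType) (T : finType) (e : rel T) : R :=
  inf [set gamma_x e x | x in @feasible R T]%classic.

(* Let h be the Cheeger constant, x a feasible vector and g = gamma_x(G).
   Shifting x by a median value x_w gives z = x - x_w whose positive and negative
   parts are each supported on at most n/2 vertices.  On such vertex sets the Cheeger
   bound reads |dS| >= h k |S|, and the discrete co-area inequality (peeling off level
   sets) turns it into 2 h k sum f <= sum over edges |f u - f v| for f = (z+)^2 and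
   f = (z-)^2.  Along an edge these two squares change by at most g (|z u| + |z v|),
   so h sum z^2 <= g sum |z|, and Cauchy-Schwarz over the n - 1 possibly nonzero
   entries of z gives h^2 sum z^2 <= (n - 1) g^2.  Since sum x = 0 and some |x v| = 1,
   sum z^2 >= sum x^2 >= n / (n - 1); hence h sqrt n <= (n - 1) g, which is strictly
   stronger than h <= sqrt (n - 1) g because h > 0 for a connected graph. *)

From HB Require Import structures.
From mathcomp Require Import all_boot all_order all_algebra.
From mathcomp Require Import all_classical all_reals.
From mathcomp Require Import ring lra zify.
Import Order.TTheory GRing.Theory Num.Theory.
Set Implicit Arguments. Unset Strict Implicit.
Local Open Scope ring_scope.

Lemma sqr_sum_le_card (R : realDomainType) (I : finType) (A : {set I}) (a : I -> R) :
  (\sum_(i in A) a i) ^+ 2 <= #|A|%:R * \sum_(i in A) a i ^+ 2.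
Proof.
set s := \sum_(i in A) a i; set m : R := #|A|%:R.
have [A0|A_gt0] := posnP #|A|.
  by rewrite /s (cards0_eq A0) !big_set0 expr0n mulr0.
have var_ge0 : 0 <= \sum_(i in A) (m * a i - s) ^+ 2 by apply: sumr_ge0 => i _; exact: sqr_ge0.
have var_eq : \sum_(i in A) (m * a i - s) ^+ 2 = m * (m * \sum_(i in A) a i ^+ 2 - s ^+ 2).
  rewrite (eq_bigr (fun i => m ^+ 2 * a i ^+ 2 - (2 * m * s) * a i + s ^+ 2)); last first.
    by move=> i _; ring.
  by rewrite !big_split /= sumrN -!mulr_sumr sumr_const -/s -mulr_natr; ring.
by rewrite -subr_ge0 -(pmulr_rge0 _ (_ : 0 < m)) ?ltr0n // -var_eq.
Qed.

Lemma sqr_sum_le_of_zero (R : realDomainType) (T : finType) (a : T -> R) (w : T) :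
  a w = 0 -> (\sum_v a v) ^+ 2 <= (#|T|%:R - 1) * \sum_v a v ^+ 2.
Proof.
move=> aw0; have drop (F : T -> R) : F w = 0 -> \sum_v F v = \sum_(v in [set~ w]) F v.
  by move=> Fw0; rewrite (bigD1 w) //= Fw0 add0r; apply: eq_bigl => v; rewrite in_setC1.
rewrite drop // (drop (fun v => a v ^+ 2)) /= ?aw0 ?expr0n //.
have -> : #|T|%:R - 1 = #|[set~ w]|%:R :> R.
  have T_gt0 : (0 < #|T|)%N by apply/card_gt0P; exists w.
  by rewrite cardsC1 -[in LHS](prednK T_gt0) -natr1 addrK.
exact: sqr_sum_le_card.
Qed.

Lemma sum0_sqr_le (R : realDomainType) (T : finType) (x : T -> R) (v : T) :
  \sum_u x u = 0 -> #|T|%:R * x v ^+ 2 <= (#|T|%:R - 1) * \sum_u x u ^+ 2.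
Proof.
move=> sum_x0; pose y u := if u == v then 0 else x u.
have split_y (F : R -> R) : F 0 = 0 -> \sum_u F (x u) = F (x v) + \sum_u F (y u).
  move=> F0; rewrite (bigD1 v) //= [in RHS](bigD1 v) //= /y eqxx F0 add0r; congr (_ + _).
  by apply: eq_bigr => u /negbTE ->.
have sum_y : \sum_u y u = - x v.
  have /= := split_y (fun r => r) erefl.
  by rewrite sum_x0 => /eqP; rewrite addrC eq_sym addr_eq0 => /eqP.
have /= := sqr_sum_le_of_zero (_ : y v = 0); rewrite /y eqxx -/y sum_y sqrrN => /(_ erefl).
by rewrite (split_y (fun r => r ^+ 2)) ?expr0n //; nra.
Qed.

Lemma sum_sqr_le_shift (R : realDomainType) (T : finType) (x : T -> R) (c : R) :
  \sum_u x u = 0 -> \sum_u x u ^+ 2 <= \sum_u (x u - c) ^+ 2.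
Proof.
move=> sum_x0.
have -> : \sum_u (x u - c) ^+ 2 = \sum_u x u ^+ 2 - 2 * c * \sum_u x u + #|T|%:R * c ^+ 2.
  rewrite (eq_bigr (fun u => x u ^+ 2 - (2 * c) * x u + c ^+ 2)); last by move=> u _; ring.
  by rewrite !big_split /= sumrN -mulr_sumr sumr_const -mulr_natl; ring.
by rewrite sum_x0 mulr0 subr0 lerDl mulr_ge0 ?ler0n ?sqr_ge0.
Qed.

Lemma sqr_max0_split (R : realDomainType) (a : R) :
  Num.max a 0 ^+ 2 + Num.max (- a) 0 ^+ 2 = a ^+ 2.
Proof.
case: (lerP 0 a) => [a_ge0|a_lt0].
  by rewrite (max_r (_ : - a <= 0)) ?oppr_le0 // expr0n addr0.
by rewrite max_l ?oppr_ge0 ?ltW // expr0n add0r sqrrN.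
Qed.

Lemma sqr_max0_gt0 (R : realDomainType) (a : R) : 0 < Num.max a 0 ^+ 2 -> 0 < a.
Proof. by case: (ltrP 0 a); rewrite ?expr0n ?ltxx. Qed.

Lemma dist_sqr_max0_le (R : realFieldType) (a b g : R) : `|a - b| <= g ->
  `|Num.max a 0 ^+ 2 - Num.max b 0 ^+ 2| + `|Num.max (- a) 0 ^+ 2 - Num.max (- b) 0 ^+ 2|
    <= g * (`|a| + `|b|).
Proof.
rewrite ler_norml => /andP[g1 g2].
case: (lerP 0 a) => ha; case: (lerP 0 b) => hb.
- rewrite (ger0_norm ha) (ger0_norm hb).
  rewrite (max_r (_ : - a <= 0)) ?oppr_le0 // (max_r (_ : - b <= 0)) ?oppr_le0 //.
  by rewrite expr0n /= subrr normr0 addr0 ler_norml; apply/andP; split; nra.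
- rewrite (ger0_norm ha) (ltr0_norm hb).
  rewrite (max_r (_ : - a <= 0)) ?oppr_le0 // (max_l (_ : 0 <= - b)) ?oppr_ge0 ?(ltW hb) //.
  by rewrite expr0n /= subr0 sub0r normrN !ger0_norm ?sqr_ge0 //; nra.
- rewrite (ltr0_norm ha) (ger0_norm hb).
  rewrite (max_l (_ : 0 <= - a)) ?oppr_ge0 ?(ltW ha) // (max_r (_ : - b <= 0)) ?oppr_le0 //.
  by rewrite expr0n /= subr0 sub0r normrN !ger0_norm ?sqr_ge0 //; nra.
- rewrite (ltr0_norm ha) (ltr0_norm hb).
  rewrite (max_l (_ : 0 <= - a)) ?oppr_ge0 ?(ltW ha) //.
  rewrite (max_l (_ : 0 <= - b)) ?oppr_ge0 ?(ltW hb) //.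
  by rewrite expr0n /= subrr normr0 add0r ler_norml; apply/andP; split; nra.
Qed.

Lemma dist_truncate_le (R : realDomainType) (a b t : R) :
  0 < t -> 0 <= a -> 0 <= b -> (0 < a -> t <= a) -> (0 < b -> t <= b) ->
  `|Num.max (a - t) 0 - Num.max (b - t) 0|
    + t * ((0 < a) && ~~ (0 < b))%:R + t * ((0 < b) && ~~ (0 < a))%:R <= `|a - b|.
Proof.
move=> t_gt0 a_ge0 b_ge0 ta tb.
have trunc c : 0 <= c -> (0 < c -> t <= c) ->
    Num.max (c - t) 0 = if 0 < c then c - t else 0.
  move=> c_ge0 tc; case: ifP => [/tc tc'|]; first by rewrite max_l // subr_ge0.
  by move/negbT; rewrite -leNgt => c_le0; rewrite max_r // subr_le0 (le_trans c_le0) ?ltW.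
rewrite (trunc a) // (trunc b) //.
case: (boolP (0 < a)) => [a_gt0|]; case: (boolP (0 < b)) => [b_gt0|] /=;
  rewrite ?mulr0 ?mulr1 ?addr0.
- by rewrite opprB addrA subrK.
- rewrite -leNgt => b_le0; have -> : b = 0 by apply/le_anti; rewrite b_le0.
  by rewrite !subr0 !ger0_norm ?subr_ge0 ?ta // subrK.
- rewrite -leNgt => a_le0; have -> : a = 0 by apply/le_anti; rewrite a_le0.
  by rewrite !sub0r !normrN !ger0_norm ?subr_ge0 ?tb // subrK.
- by rewrite subrr normr0 normr_ge0.
Qed.

Lemma exists_median (R : realDomainType) (T : finType) (x : T -> R) : (0 < #|T|)%N ->
  exists w, (2 * #|[set v | (x w < x v)%R]| <= #|T|)%N /\
            (2 * #|[set v | (x v < x w)%R]| <= #|T|)%N.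
Proof.
case/card_gt0P => v1 _.
have [vmin _ vmin_le] := arg_minP x (isT : xpredT v1).
pose lo_half i := (2 * #|[set v | (x v < x i)%R]| <= #|T|)%N.
have lo_vmin : lo_half vmin.
  rewrite /lo_half (_ : [set v | (x v < x vmin)%R] = finset.set0) ?cards0 //.
  by apply/setP => v; rewrite !inE ltNge vmin_le.
(* If the upper set of w held more than half of T, its lowest vertex would also have a
   lower set of at most half of T, contradicting the maximality of x w. *)
have [w lo_w w_max] := arg_maxP x lo_vmin.
exists w; split => //; rewrite leqNgt; apply/negP => up_big.
have [u0 u0_up] : exists u0, u0 \in [set v | x w < x v].
  by apply/card_gt0P; rewrite -(ltn_pmul2l (isT : (0 < 2)%N)) muln0 (leq_trans _ up_big).
have [u u_up u_min] : exists2 u, x w < x u & forall v, x w < x v -> x u <= x v.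
  case: (arg_minP x u0_up) => u u_up u_min; exists u => [|v wv].
    by move: u_up; change (u \in [set v | x w < x v] -> x w < x u); rewrite inE.
  by apply: u_min; change (v \in [set v | x w < x v]); rewrite inE.
have lo_u : lo_half u.
  have sub : [set v | x v < x u] \subset ~: [set v | x w < x v].
    apply/fintype.subsetP => v; rewrite !inE => xvu; apply/negP => v_up.
    by move: (u_min v v_up); rewrite leNgt xvu.
  rewrite /lo_half; have := subset_leq_card sub; have := cardsC [set v | x w < x v]; lia.
by move: (lt_le_trans u_up (w_max u lo_u)); rewrite ltxx.
Qed.

Section EdgeSums.
Variables (R : pzRingType) (T : finType) (e : rel T).

Lemma sum_edges_fst (F : T -> R) :
  \sum_(p | e p.1 p.2) F p.1 = \sum_u (deg e u)%:R * F u.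
Proof.
rewrite -(pair_big_dep xpredT (fun u v => e u v) (fun u _ => F u)) /=.
by apply: eq_bigr => u _; rewrite sumr_const /deg cardsE mulr_natl.
Qed.

Lemma sum_edges_boundary (S : {set T}) :
  \sum_(p | e p.1 p.2) ((p.1 \in S) && (p.2 \notin S))%:R = (boundary_size e S)%:R :> R.
Proof.
rewrite /boundary_size -sum1_card natr_sum big_mkcond [RHS]big_mkcond /=.
by apply: eq_bigr => p _; rewrite inE; case: (e _ _); case: (_ \in S); case: (_ \in S).
Qed.

Hypothesis e_sym : symmetric e.

Lemma sum_edges_swap (G : T * T -> R) :
  \sum_(p | e p.1 p.2) G p = \sum_(p | e p.1 p.2) G (p.2, p.1).
Proof.
rewrite (reindex_inj (h := fun p : T * T => (p.2, p.1))) /=; last first.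
  by move=> [a b] [c d] /= [-> ->].
by apply: eq_bigl => p /=; rewrite e_sym.
Qed.

End EdgeSums.

Section Coarea.
Variables (R : realFieldType) (T : finType) (e : rel T) (c : R) (A : {set T}).
Hypothesis e_sym : symmetric e.
Hypothesis cut_A : forall S : {set T}, S \subset A -> c * #|S|%:R <= (boundary_size e S)%:R.

Lemma coarea_le (f : T -> R) : (forall v, 0 <= f v) -> [set v | 0 < f v] \subset A ->
  2 * c * \sum_v f v <= \sum_(p | e p.1 p.2) `|f p.1 - f p.2|.
Proof.
(* With t the least positive value of f and S its support,
   f = (f - t)^+ + t 1_S, and the bottom layer t 1_S contributes t |dS| to the edge
   sum in each orientation, independently of (f - t)^+ (dist_truncate_le). *)
move=> f_ge0; have [m] := ubnP #|[set v | 0 < f v]|.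
elim: m f f_ge0 => // m IH f f_ge0 supp_lt suppA.
set S := [set v | 0 < f v] in supp_lt suppA.
have [S0|[v0 v0S]] := set_0Vmem S.
  have f0 v : f v = 0.
    apply/le_anti; rewrite f_ge0 andbT leNgt; apply/negP => fv.
    by move/setP: S0 => /(_ v); rewrite !inE fv.
  by rewrite big1 ?mulr0 ?sumr_ge0 // => v _; rewrite f0.
have [vm vm_pos t_min] : exists2 vm, 0 < f vm & forall v, 0 < f v -> f vm <= f v.
  case: (arg_minP f v0S) => vm vmS vm_min; exists vm => [|v fv].
    by move: (vmS : vm \in S); rewrite inE.
  by apply: (vm_min v (_ : v \in S)); rewrite inE.
set t := f vm; have t_gt0 : 0 < t := vm_pos.
have vmS : vm \in S by rewrite inE.
pose g v := Num.max (f v - t) 0.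
have suppg : [set v | 0 < g v] \subset S :\ vm.
  apply/fintype.subsetP => v; rewrite !inE lt_max ltxx orbF subr_gt0 => tv.
  by rewrite (lt_trans t_gt0 tv) andbT; apply: contraTneq tv => ->; rewrite ltxx.
have IHg : 2 * c * \sum_v g v <= \sum_(p | e p.1 p.2) `|g p.1 - g p.2|.
  apply: IH => [v||]; first by rewrite le_max lexx orbT.
    apply: leq_ltn_trans (subset_leq_card suppg) _.
    by move: supp_lt; rewrite (cardsD1 vm S) vmS.
  exact: fintype.subset_trans suppg (fintype.subset_trans (subsetDl _ _) suppA).
have sum_f : \sum_v f v = \sum_v g v + t * #|S|%:R.
  rewrite -sum1_card natr_sum mulr_sumr (big_mkcond (mem S)) -big_split /=.
  apply: eq_bigr => v _; rewrite inE /g; case: ifP => [/t_min tv|].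
    by rewrite max_l ?subr_ge0 // mulr1 subrK.
  move/negbT; rewrite -leNgt => fv; have f0 : f v = 0 by apply/le_anti; rewrite fv f_ge0.
  by rewrite f0 addr0 sub0r max_r // oppr_le0 ltW.
have layer : \sum_(p | e p.1 p.2) `|g p.1 - g p.2| + t * (boundary_size e S)%:R
    + t * (boundary_size e S)%:R <= \sum_(p | e p.1 p.2) `|f p.1 - f p.2|.
  have E : t * (boundary_size e S)%:R =
      \sum_(p | e p.1 p.2) t * ((p.1 \in S) && (p.2 \notin S))%:R.
    by rewrite -mulr_sumr sum_edges_boundary.
  rewrite {1}E {}E.
  rewrite {2}(sum_edges_swap e_sym (fun p => t * ((p.1 \in S) && (p.2 \notin S))%:R)).
  rewrite -!big_split /=.
  apply: ler_sum => p _; rewrite !inE.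
  exact: dist_truncate_le (f_ge0 _) (f_ge0 _) (@t_min _) (@t_min _).
have cut := ler_wpM2l (ltW t_gt0) (cut_A suppA).
rewrite sum_f mulrDr; apply: le_trans layer; rewrite -addrA lerD //; nra.
Qed.

End Coarea.

Section GammaX.
Variables (R : realType) (T : finType) (e : rel T).

Lemma gamma_x_ge0 (x : T -> R) : 0 <= gamma_x e x.
Proof. by rewrite /gamma_x; elim/big_ind: _ => // a b a_ge0 b_ge0; rewrite le_max a_ge0. Qed.

Lemma edge_le_gamma_x (x : T -> R) u v : e u v -> `|x u - x v| <= gamma_x e x.
Proof.
exact: (@le_bigmax_cond _ _ _ 0 (u, v) (fun p : T * T => e p.1 p.2) (fun p => `|x p.1 - x p.2|)).
Qed.

End GammaX.

Lemma sup_norm_attained (R : realType) (T : finType) (x : T -> R) :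
  sup_norm x != 0 -> exists v, sup_norm x = `|x v|.
Proof.
case: (pickP (xpredT : pred T)) => [v1 _ _|T0]; last by rewrite /sup_norm big_pred0 ?eqxx.
by rewrite /sup_norm (bigmax_eq_arg 0 v1) //; eexists.
Qed.

Section CheegerGammaX.
Variables (R : realType) (T : finType) (e : rel T) (k : nat) (h : R).
Hypotheses (e_sym : symmetric e) (e_reg : regular e k) (k_gt0 : (0 < k)%N) (h_ge0 : 0 <= h).
Hypothesis cut_half : forall S : {set T}, (2 * #|S| <= #|T|)%N ->
  h * (k * #|S|)%:R <= (boundary_size e S)%:R.

Let cut_sub (A : {set T}) : (2 * #|A| <= #|T|)%N ->
  forall S : {set T}, S \subset A -> h * k%:R * #|S|%:R <= (boundary_size e S)%:R.
Proof.
move=> A_half S /subset_leq_card SA; rewrite -mulrA -natrM; apply: cut_half.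
by apply: leq_trans A_half; rewrite leq_mul2l SA orbT.
Qed.

Lemma median_sum_sqr_le (x : T -> R) (w : T) :
  (2 * #|[set v | (x w < x v)%R]| <= #|T|)%N -> (2 * #|[set v | (x v < x w)%R]| <= #|T|)%N ->
  h * \sum_v (x v - x w) ^+ 2 <= gamma_x e x * \sum_v `|x v - x w|.
Proof.
move=> up_half lo_half; set g := gamma_x e x; pose z v := x v - x w.
pose zp v := Num.max (z v) 0 ^+ 2; pose zm v := Num.max (- z v) 0 ^+ 2.
have supp_zp : [set v | 0 < zp v] \subset [set v | x w < x v].
  by apply/fintype.subsetP => v; rewrite !inE -[x w < x v]subr_gt0 => /sqr_max0_gt0.
have supp_zm : [set v | 0 < zm v] \subset [set v | x v < x w].
  by apply/fintype.subsetP => v; rewrite !inE -[x v < x w]subr_gt0 -opprB => /sqr_max0_gt0.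
have co_p := coarea_le e_sym (cut_sub up_half) (fun v => sqr_ge0 _) supp_zp.
have co_m := coarea_le e_sym (cut_sub lo_half) (fun v => sqr_ge0 _) supp_zm.
have split_z : \sum_v z v ^+ 2 = \sum_v zp v + \sum_v zm v.
  by rewrite -big_split; apply: eq_bigr => v _; exact/esym/sqr_max0_split.
have edges : \sum_(p | e p.1 p.2) `|zp p.1 - zp p.2| + \sum_(p | e p.1 p.2) `|zm p.1 - zm p.2|
    <= g * (2 * k%:R * \sum_v `|z v|).
  rewrite -big_split /=.
  have -> : 2 * k%:R * \sum_v `|z v| = \sum_(p | e p.1 p.2) (`|z p.1| + `|z p.2|).
    rewrite big_split /= (sum_edges_swap e_sym (fun p => `|z p.2|)) /=.
    rewrite !(sum_edges_fst e (fun v => `|z v|)).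
    by rewrite mulr_sumr -big_split; apply: eq_bigr => v _ /=; rewrite e_reg; ring.
  rewrite mulr_sumr; apply: ler_sum => p ep; apply: dist_sqr_max0_le.
  by rewrite /z opprB addrA subrK edge_le_gamma_x.
have k_pos : 0 < 2 * k%:R :> R by rewrite mulr_gt0 ?ltr0n.
rewrite -(ler_pM2l k_pos) split_z; nra.
Qed.

Lemma cheeger_gamma_x (x : T -> R) : feasible x ->
  h * Num.sqrt #|T|%:R <= (#|T|%:R - 1) * gamma_x e x.
Proof.
move=> [sum_x0 norm_x1]; set N : R := #|T|%:R; set g := gamma_x e x.
have [v0 x_v0] : exists v0, `|x v0| = 1.
  have [|v0 norm_v0] := @sup_norm_attained _ _ x; first by rewrite norm_x1 oner_neq0.
  by exists v0; rewrite -norm_v0.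
have T_gt0 : (0 < #|T|)%N by apply/card_gt0P; exists v0.
have [w [up_half lo_half]] := exists_median x T_gt0.
pose z v := x v - x w.
have sum_x2 : N <= (N - 1) * \sum_v x v ^+ 2.
  have x_v0_sqr : x v0 ^+ 2 = 1 by rewrite -real_normK ?num_real // x_v0 expr1n.
  by have := sum0_sqr_le v0 sum_x0; rewrite x_v0_sqr mulr1.
have sum_z2 : \sum_v x v ^+ 2 <= \sum_v z v ^+ 2 := sum_sqr_le_shift (x w) sum_x0.
have sum_z1 : (\sum_v `|z v|) ^+ 2 <= (N - 1) * \sum_v z v ^+ 2.
  have zw : `|z w| = 0 by rewrite /z subrr normr0.
  have abs_sqr : \sum_v `|z v| ^+ 2 = \sum_v z v ^+ 2.
    by apply: eq_bigr => v _; rewrite real_normK ?num_real.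
  by rewrite -abs_sqr; exact: (@sqr_sum_le_of_zero _ _ (fun v => `|z v|) w zw).
have key := median_sum_sqr_le up_half lo_half; rewrite -/g in key.
have N1 : 1 <= N by rewrite ler1n.
have g_ge0 : 0 <= g := gamma_x_ge0 e x.
set P := \sum_v z v ^+ 2 in sum_z2 sum_z1 key *.
set Q := \sum_v `|z v| in sum_z1 key.
have P_gt0 : 0 < P by nra.
have Q_ge0 : 0 <= Q by rewrite sumr_ge0.
rewrite -ler_sqr ?nnegrE ?mulr_ge0 ?sqrtr_ge0 ?subr_ge0 // !exprMn sqr_sqrtr ?ler0n //.
have : h ^+ 2 * P <= g ^+ 2 * (N - 1).
  rewrite -(ler_pM2r P_gt0); apply: le_trans (_ : (g * Q) ^+ 2 <= _).
    by rewrite -mulrA -expr2 -exprMn ler_sqr ?nnegrE ?mulr_ge0 ?(ltW P_gt0).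
  by rewrite exprMn -[_ * _ * P]mulrA ler_wpM2l ?sqr_ge0.
move=> /(ler_wpM2l (_ : 0 <= N - 1)) hP; have h2_ge0 := sqr_ge0 h.
have := ler_wpM2l h2_ge0 sum_x2; have := ler_wpM2l h2_ge0 sum_z2; nra.
Qed.

End CheegerGammaX.

Lemma boundary_size_gt0 (T : finType) (e : rel T) (S : {set T}) (a b : T) :
  connect e a b -> a \in S -> b \notin S -> (0 < boundary_size e S)%N.
Proof.
move=> /connectP[p e_p ->{b}]; elim: p a e_p => [|y p IH] a /= => [_ -> //|/andP[e_ay e_p] aS].
have [yS|yNS] := boolP (y \in S); first exact: IH.
by move=> _; apply/card_gt0P; exists (a, y); rewrite inE /= e_ay aS.
Qed.

Lemma vol_regular (T : finType) (e : rel T) (k : nat) (S : {set T}) :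
  regular e k -> vol e S = (k * #|S|)%N.
Proof. by move=> e_reg; rewrite /vol (eq_bigr _ (fun u _ => e_reg u)) sum_nat_const mulnC. Qed.

Lemma exists_two_vertices (T : finType) : (2 <= #|T|)%N -> exists a b : T, a != b.
Proof.
move=> n_ge2; have /card_gt0P[a _] : (0 < #|T|)%N by lia.
have /card_gt0P[b] : (0 < #|[set~ a]|)%N by rewrite cardsC1; lia.
by rewrite in_setC1 eq_sym => ab; exists a, b.
Qed.

Lemma regular_connected_deg_gt0 (T : finType) (e : rel T) (k : nat) :
  connected_graph e -> regular e k -> (2 <= #|T|)%N -> (0 < k)%N.
Proof.
move=> e_conn e_reg /exists_two_vertices[a [b ab]].
have bNa : b \notin [set a] by rewrite inE eq_sym.
have /card_gt0P[[u v]] := boundary_size_gt0 (e_conn a b) (set11 a) bNa.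
rewrite !inE /= => /and3P[e_uv _ _]; rewrite -(e_reg u).
by apply/card_gt0P; exists v; rewrite inE.
Qed.

Section Cheeger.
Variables (R : realType) (T : finType) (e : rel T).

Lemma hS_ge0 (S : {set T}) : 0 <= hS R e S.
Proof. by rewrite /hS divr_ge0. Qed.

Lemma cheeger_le_hS (S : {set T}) :
  S != finset.set0 -> S != finset.setT -> cheeger R e <= hS R e S.
Proof.
move=> S0 ST; apply: ge_inf; last by exists S.
by exists 0 => _ [S' _ <-]; exact: hS_ge0.
Qed.

Lemma cheeger_ge (c : R) : (2 <= #|T|)%N ->
  (forall S : {set T}, S != finset.set0 -> S != finset.setT -> c <= hS R e S) ->
  c <= cheeger R e.
Proof.
move=> /exists_two_vertices[a [b ab]] c_le.
apply: lb_le_inf => [|_ [S [S0 ST] <-]]; last exact: c_le.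
exists (hS R e [set a]), [set a] => //; split; apply/eqP => /setP.
  by move/(_ a); rewrite !inE eqxx.
by move/(_ b); rewrite !inE eq_sym (negbTE ab).
Qed.

Variable k : nat.
Hypothesis e_reg : regular e k.

Lemma hS_regular (S : {set T}) :
  hS R e S = (boundary_size e S)%:R / (k * minn #|S| #|~: S|)%:R.
Proof. by rewrite /hS !(vol_regular _ e_reg) minnMr. Qed.

Lemma cheeger_cut (S : {set T}) : (2 * #|S| <= #|T|)%N ->
  cheeger R e * (k * #|S|)%:R <= (boundary_size e S)%:R.
Proof.
move=> S_half; have [->|[s sS]] := set_0Vmem S; first by rewrite cards0 muln0 mulr0.
have ST : S != finset.setT.
  by apply: contraTneq S_half => ->; rewrite cardsT -ltnNge ltn_Pmull //; apply/card_gt0P; exists s.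
have S0 : S != finset.set0 by apply/set0Pn; exists s.
have [kS0|kS_gt0] := posnP (k * #|S|); first by rewrite kS0 mulr0.
have := cheeger_le_hS S0 ST; rewrite hS_regular (minn_idPl _); last first.
  by have := cardsC S; lia.
by rewrite ler_pdivlMr ?ltr0n.
Qed.

Lemma cheeger_gt0 : connected_graph e -> (2 <= #|T|)%N -> 0 < cheeger R e.
Proof.
move=> e_conn n_ge2; have k_gt0 := regular_connected_deg_gt0 e_conn e_reg n_ge2.
have kn_gt0 : (0 < k * #|T|)%N by rewrite muln_gt0 k_gt0; lia.
apply: (@lt_le_trans _ _ ((k * #|T|)%:R)^-1); first by rewrite invr_gt0 ltr0n.
apply: cheeger_ge => // S S0 ST.
have [[s sS] [t tS]] : (exists s, s \in S) /\ (exists t, t \notin S).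
  split; first by apply/set0Pn.
  apply/existsP; rewrite -negb_forall; apply: contra ST => /forallP S_all.
  by apply/eqP/setP => v; rewrite inE S_all.
have b_gt0 := boundary_size_gt0 (e_conn s t) sS tS.
have m_gt0 : (0 < minn #|S| #|~: S|)%N.
  by rewrite leq_min; apply/andP; split; apply/card_gt0P; [exists s | exists t; rewrite inE].
have m_le : (minn #|S| #|~: S| <= #|T|)%N by have := cardsC S; lia.
rewrite hS_regular ler_pdivlMr ?ltr0n ?muln_gt0 ?k_gt0 // mulrC.
by rewrite ler_pdivrMr ?ltr0n // -natrM ler_nat; nia.
Qed.

End Cheeger.

Lemma exists_feasible (R : realType) (T : finType) : (2 <= #|T|)%N ->
  exists x : T -> R, feasible x.
Proof.
move=> /exists_two_vertices[a [b ab]].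
pose x v : R := if v == a then 1 else if v == b then -1 else 0.
have sum_x : \sum_v x v = 0.
  rewrite (bigD1 a) //= (bigD1 b) 1?eq_sym // big1 /= => [|v /andP[/negbTE va /negbTE vb]].
    by rewrite /x eqxx eq_sym (negbTE ab) eqxx addr0 subrr.
  by rewrite /x va vb.
exists x; split; first exact: sum_x.
apply/le_anti/andP; split.
  apply: bigmax_le => // v _; rewrite /x.
  by case: (v == a); case: (v == b); rewrite ?normrN ?normr1 ?normr0.
by apply: le_trans (le_bigmax_cond _ _ (_ : xpredT a)) => //=; rewrite /x eqxx normr1.
Qed.

Lemma gamma_ge (R : realType) (T : finType) (e : rel T) (c : R) : (2 <= #|T|)%N ->
  (forall x, feasible x -> c <= gamma_x e x) -> c <= gamma R e.
Proof.
move=> /(exists_feasible R)[x0 x0_feas] c_le.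
by apply: lb_le_inf => [|_ [x x_feas <-]]; [exists (gamma_x e x0), x0 | exact: c_le].
Qed.

Lemma lt_sqrt_pred_mul (R : rcfType) (h g N : R) : 0 < h -> 1 < N ->
  h * Num.sqrt N <= (N - 1) * g -> h < Num.sqrt (N - 1) * g.
Proof.
move=> h_gt0 N_gt1; set s := Num.sqrt (N - 1).
have s_gt0 : 0 < s by rewrite sqrtr_gt0 subr_gt0.
have s_lt : s < Num.sqrt N by rewrite ltr_sqrt ?gtrBl // (lt_trans ltr01).
have -> : (N - 1) * g = s * (s * g) by rewrite mulrA -expr2 sqr_sqrtr // subr_ge0 ltW.
by move=> le_hg; rewrite -(ltr_pM2l s_gt0) (lt_le_trans _ le_hg) // mulrC ltr_pM2l.
Qed.

Theorem theorem4p6 (R : realType) (T : finType) (e : rel T) (k : nat) :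
  simple_graph e -> connected_graph e -> regular e k -> (2 <= #|T|)%N ->
  cheeger R e < Num.sqrt ((#|T| - 1)%:R) * gamma R e.
Proof.
move=> [e_sym _] e_conn e_reg n_ge2.
have k_gt0 := regular_connected_deg_gt0 e_conn e_reg n_ge2.
have h_gt0 := cheeger_gt0 R e_reg e_conn n_ge2.
have N_gt1 : 1 < #|T|%:R :> R by rewrite ltr1n.
have gamma_x_ge x : feasible x -> cheeger R e * Num.sqrt #|T|%:R / (#|T|%:R - 1) <= gamma_x e x.
  move=> /(cheeger_gamma_x e_sym e_reg k_gt0 (ltW h_gt0) (cheeger_cut R e_reg)).
  by rewrite ler_pdivrMr ?subr_gt0 // [gamma_x _ _ * _]mulrC.
have := gamma_ge n_ge2 gamma_x_ge.
rewrite ler_pdivrMr ?subr_gt0 // [gamma R e * _]mulrC natrB; last lia.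
exact: lt_sqrt_pred_mul.
Qed.
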